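(* Let $\mathcal X$ and $\mathcal Y$ be Polish spaces, let $T:\mathcal X\to\mathcal Y$ be a measurable map, and let $N:\mathcal Y\times\mathcal Y\to[0,\infty)$ be a continuous, bounded pseudo-metric on $\mathcal Y$. Define the pulled-back pseudo-metric $\tilde T(N)$ on $\mathcal X$ by $\tilde T(N)(x,x'):=N(T(x),T(x'))$. Then for all Borel probability measures $a,b$ on $\mathcal X$, $$\mathcal W(N)(T_\# a,\,T_\# b)=\mathcal W(\tilde T(N))(a,b).$$
   Context: For a pseudo-metric (cost) $c$ on a Polish space $\mathcal Z$ and Borel probability measures $\mu,\nu$ on $\mathcal Z$, the Kantorovich (Wasserstein) distance is $\mathcal W(c)(\mu,\nu):=\inf_{\pi\in U(\mu,\nu)}\int_{\mathcal Z\times\mathcal Z} c(z,z')\,d\pi(z,z')$, where $U(\mu,\nu)$ is the set of couplings, i.e. probability measures on $\mathcal Z\times\mathcal Z$ with marginals $\mu$ and $\nu$. $T_\# a$ denotes the push-forward measure $a\circ T^{-1}$. *)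

From HB Require Import structures.
From mathcomp Require Import all_boot all_order all_algebra.
From mathcomp Require Import all_classical all_reals all_analysis.
Set Implicit Arguments. Unset Strict Implicit. Unset Printing Implicit Defensive.
Import Order.TTheory GRing.Theory Num.Theory.
Local Open Scope classical_set_scope.
Local Open Scope ring_scope.

(* A Polish space: a complete metric space (complete pseudometric structure
   + Hausdorff) that is separable (has a countable dense subset). *)
Definition polish (R : realType) (X : completePseudoMetricType R) : Prop :=
  hausdorff_space X /\ exists D : set X, countable D /\ dense D.

Notation Borel X := (g_sigma_algebraType (@open X)).

Definition pseudometric (R : realType) (Y : Type) (N : Y -> Y -> R) : Prop :=
  (forall y y', 0 <= N y y') /\
  (forall y, N y y = 0) /\
  (forall y y', N y y' = N y' y) /\
  (forall y y' y'', N y y'' <= N y y' + N y' y'').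

Definition couplings (R : realType) d (T : measurableType d)
    (mu nu : set T -> \bar R) : set (probability (T * T)%type R) :=
  [set pi | (forall A, measurable A -> pi (A `*` setT) = mu A) /\
            (forall B, measurable B -> pi (setT `*` B) = nu B)].

Definition Wdist (R : realType) d (T : measurableType d) (c : T -> T -> R)
    (mu nu : set T -> \bar R) : \bar R :=
  ereal_inf [set (\int[pi]_z (c z.1 z.2)%:E)%E | pi in couplings mu nu].

From HB Require Import structures.
From mathcomp Require Import all_boot all_order all_algebra.
From mathcomp Require Import all_classical all_reals all_analysis.
From mathcomp Require Import measurable_realfun lra.
Set Implicit Arguments. Unset Strict Implicit. Unset Printing Implicit Defensive.
Import Order.TTheory GRing.Theory Num.Theory.
Local Open Scope classical_set_scope.
Local Open Scope ring_scope.

(* Pushing a coupling of a and b forward by T x T gives a coupling of T#a and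
   T#b with the same cost, so W(N)(T#a, T#b) <= W(N o T)(a, b).
   Conversely, let pi couple T#a and T#b and r > 0.  Since Y is separable, the
   N-balls of radius r around a dense sequence (s_k) can be disjointified into
   Borel cells B_k, and E_k := T^-1(B_k) partitions X.  Gluing the normalized
   restrictions of a to E_i and of b to E_j with the weights pi(B_i x B_j)
   yields a coupling of a and b that gives E_i x E_j at most the mass
   pi(B_i x B_j).  On these cells N o T and N stay within 2r of N(s_i, s_j), so
   this coupling costs at most the cost of pi plus 4r.
   The same dense sequence writes N as a countable infimum, which makes N
   measurable for the product of the Borel sigma-algebras. *)

Lemma open_Borel_measurable (Y : ptopologicalType) (A : set Y) :
  open A -> measurable (A : set (Borel Y)).
Proof. exact: sub_sigma_algebra. Qed.

Lemma continuous_Borel_measurable (R : realType) (Y : ptopologicalType)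
    (f : Y -> R^o) :
  continuous f -> measurable_fun [set: Borel Y] (f : Borel Y -> R).
Proof.
move=> cf; apply: (measurability _ (RGenOInfty.measurableE R)).
move=> _ [_ [x ->] <-]; rewrite setTI set_itvoy.
apply: open_Borel_measurable; have := @open_comp _ _ f [set y | x < y].
by apply => [z _|]; [exact: cf|exact: open_gt].
Qed.

Lemma dense_seq (Y : ptopologicalType) (D : set Y) : countable D -> dense D ->
  [set: Y] !=set0 ->
  exists s : nat -> Y, forall U, open U -> U !=set0 -> exists k, U (s k).
Proof.
move=> cD dD [y0 _]; have [D0|/surjfunPex [s Ds]] := pfcard_geP cD.
  by have [? []] := dD setT (ex_intro _ y0 I) openT; rewrite D0.
exists s => U oU U0; have [y [Uy Dy]] := dD U U0 oU.
by move: Dy; rewrite Ds => -[k _ sky]; exists k; rewrite sky.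
Qed.

Section pseudometric_cost.
Variables (R : realType) (Y : ptopologicalType) (N : Y -> Y -> R).
Hypothesis hN : pseudometric N.
Hypothesis cN : forall y, continuous (N y : Y -> R^o).

Lemma open_pseudometric_ball y e : open [set z | N y z < e].
Proof.
have := @open_comp _ _ (N y : Y -> R^o) [set r | r < e].
by apply => [z _|]; [exact: cN|exact: open_lt].
Qed.

Lemma pseudometric_dense_seq (D : set Y) : countable D -> dense D ->
  [set: Y] !=set0 -> exists s : nat -> Y, forall y e, 0 < e ->
  exists k, N (s k) y < e.
Proof.
move=> cD dD Y0; have [s dense_s] := dense_seq cD dD Y0.
exists s => y e e0; have [_ [Nyy [Nsym _]]] := hN.
have ball0 : [set z | N y z < e] !=set0 by exists y; rewrite /= Nyy.
by have [k yk] := dense_s _ (open_pseudometric_ball y e) ball0; exists k; rewrite Nsym.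
Qed.

Variable s : nat -> Y.
Hypothesis dense_s : forall y e, 0 < e -> exists k, N (s k) y < e.

Lemma measurable_pseudometric :
  measurable_fun [set: Borel Y * Borel Y] (fun z => N z.1 z.2).
Proof.
have [N0 [_ [Nsym Ntri]]] := hN.
pose h k (z : Borel Y * Borel Y) := N (s k) z.1 + N (s k) z.2.
have h_lb z : has_lbound (range (h ^~ z)).
  by exists 0 => _ [k _ <-]; rewrite addr_ge0.
have -> : (fun z : Borel Y * Borel Y => N z.1 z.2) = fun z => infs (h ^~ z) 0.
  apply/funext => z; apply/le_anti/andP; split.
    apply: lb_le_inf; first by exists (h 0%N z), 0%N.
    by move=> _ [k _ <-]; rewrite /h (Nsym (s k) z.1); exact: Ntri.
  apply/ler_addgt0Pr => e e0; have [k sk] := dense_s z.2 (divr_gt0 e0 (ltr0Sn _ 1)).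
  have hk : sdrop (h ^~ z) 0 (h k z) by exists k.
  have lb : has_lbound (sdrop (h ^~ z) 0).
    by exists 0 => _ [j _ <-]; rewrite addr_ge0.
  have := ge_inf lb hk.
  have := Ntri (s k) z.2 z.1; rewrite (Nsym z.2) /h; lra.
apply: measurable_fun_infs => [z _|k]; first exact: h_lb.
by apply: measurable_funD; apply: measurableT_comp => //;
  exact: continuous_Borel_measurable.
Qed.

End pseudometric_cost.

Record measurable_partition d (U : measurableType d) (E : nat -> set U) : Prop :=
  MeasurablePartition {
    measurable_part : forall k, measurable (E k);
    trivIset_part : trivIset setT E;
    bigcup_part : \bigcup_k E k = setT }.

Section measurable_partition.
Local Open Scope ereal_scope.
Context d (U : measurableType d) (R : realType) (E : nat -> set U).
Hypothesis hE : measurable_partition E.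

Lemma trivIset_partI (A : set U) : trivIset setT (fun k => A `&` E k).
Proof.
apply/trivIsetP => i j _ _ ij; rewrite setIACA setIid.
by move/trivIsetP : (trivIset_part hE) => /(_ i j I I ij) ->; rewrite setI0.
Qed.

Lemma bigcup_partI (A : set U) : \bigcup_k (A `&` E k) = A.
Proof. by rewrite -setI_bigcupr (bigcup_part hE) setIT. Qed.

Lemma preimage_partition d' (V : measurableType d') (f : V -> U) :
  measurable_fun setT f -> measurable_partition (fun k => f @^-1` E k).
Proof.
move=> mf; split.
- by move=> k; rewrite -[X in measurable X]setTI; exact: mf _ (measurable_part hE k).
- apply/trivIsetP => i j _ _ ij; rewrite -preimage_setI.
  by move/trivIsetP : (trivIset_part hE) => /(_ i j I I ij) ->.
- by rewrite -preimage_bigcup (bigcup_part hE).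
Qed.

Lemma measure_partition (mu : {measure set U -> \bar R}) (A : set U) :
  measurable A -> mu A = \sum_(k <oo) mu (A `&` E k).
Proof.
move=> mA; rewrite -{1}(bigcup_partI A) measure_semi_bigcup //.
- by move=> k; apply: measurableI => //; exact: measurable_part.
- exact: trivIset_partI.
- by rewrite bigcup_partI.
Qed.

Lemma ge0_integral_partition (mu : {measure set U -> \bar R}) (D : set U)
    (f : U -> \bar R) : measurable D -> measurable_fun D f ->
  (forall x, D x -> 0 <= f x) ->
  \int[mu]_(x in D) f x = \sum_(k <oo) \int[mu]_(x in D `&` E k) f x.
Proof.
move=> mD mf f0; rewrite -{1}(bigcup_partI D) ge0_integral_bigcup //.
- by move=> k; apply: measurableI => //; exact: measurable_part.
- by rewrite bigcup_partI.
- by rewrite bigcup_partI.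
- exact: trivIset_partI.
Qed.

End measurable_partition.

Section measurable_partition_prod.
Local Open Scope ereal_scope.
Context d (U : measurableType d) (R : realType) (E : nat -> set U).
Hypothesis hE : measurable_partition E.

Lemma ge0_integral_partitionX (mu : {measure set (U * U) -> \bar R})
    (f : U * U -> \bar R) : measurable_fun setT f -> (forall z, 0 <= f z) ->
  \int[mu]_z f z = \sum_(i <oo) \sum_(j <oo) \int[mu]_(z in E i `*` E j) f z.
Proof.
move=> mf f0; have hfst := preimage_partition hE (@measurable_fst _ _ U U).
have hsnd := preimage_partition hE (@measurable_snd _ _ U U).
rewrite (ge0_integral_partition hfst mu) //; apply: eq_eseriesr => i _.
rewrite setTI (ge0_integral_partition hsnd mu) //.
- by rewrite -setXT; apply: measurableX => //; exact: measurable_part.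
- exact: measurable_funS mf.
Qed.

Lemma measure_setXT_partition d' (V : measurableType d')
    (mu : {measure set (V * U) -> \bar R}) (A : set V) : measurable A ->
  mu (A `*` setT) = \sum_(j <oo) mu (A `*` E j).
Proof.
move=> mA; have mAT := measurableX mA (@measurableT _ U).
rewrite (measure_partition (preimage_partition hE measurable_snd) mu mAT).
by apply: eq_eseriesr => j _; rewrite -setTX -setXI setIT setTI.
Qed.

Lemma measure_setTX_partition d' (V : measurableType d')
    (mu : {measure set (U * V) -> \bar R}) (B : set V) : measurable B ->
  mu (setT `*` B) = \sum_(i <oo) mu (E i `*` B).
Proof.
move=> mB; have mTB := measurableX (@measurableT _ U) mB.
rewrite (measure_partition (preimage_partition hE measurable_fst) mu mTB).
by apply: eq_eseriesr => i _; rewrite -setXT -setXI setIT setTI.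
Qed.

End measurable_partition_prod.

Lemma seqDU_partition d (U : measurableType d) (F : nat -> set U) :
  (forall k, measurable (F k)) -> \bigcup_k F k = setT ->
  measurable_partition (seqDU F).
Proof.
move=> mF FT; split; [exact: seqDU_measurable|exact: trivIset_seqDU|].
by rewrite -seqDU_bigcup_eq.
Qed.

Section nneseries_term.
Local Open Scope ereal_scope.
Context (R : realType) (f : nat -> \bar R).
Hypothesis f_ge0 : forall k, 0 <= f k.

Lemma nneseries_ge_term n : f n <= \sum_(k <oo) f k.
Proof.
by rewrite (@nneseriesD1 _ f n xpredT) //; apply: leeDl; exact: nneseries_ge0.
Qed.

Lemma nneseries_single n : (forall k, k != n -> f k = 0) ->
  \sum_(k <oo) f k = f n.
Proof.
by move=> f0; rewrite (@nneseriesD1 _ f n xpredT) // eseries0 ?adde0 // => k _ /f0.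
Qed.

End nneseries_term.

Section mnormalize_mrestr.
Local Open Scope ereal_scope.
Context d (T : measurableType d) (R : realType).
Variables (mu : {measure set T -> \bar R}) (P : probability T R).
Variables (E : set T) (mE : measurable E).
Hypothesis finE : mu E \is a fin_num.

Lemma mnormalize_mrestrE (A : set T) : measurable A ->
  mnormalize (mrestr mu mE) P A * mu E = mu (A `&` E).
Proof.
move=> mA; have mAE : measurable (A `&` E) by exact: measurableI.
rewrite /mnormalize /= /mrestr setTI; case: ifPn => [/orP[/eqP E0|/eqP Eoo]|].
- rewrite E0 mule0; apply/esym/le_anti; rewrite measure_ge0 // andbT -E0.
  by apply: le_measure; rewrite ?inE //; exact: subIsetr.
- by move: finE; rewrite Eoo.
- rewrite negb_or => /andP[E0 _]; rewrite -muleA -{2}(fineK finE) -EFinM.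
  by rewrite mulVf ?mule1 // fine_eq0.
Qed.

Lemma mul_mnormalize_mrestr_disj (c : R) (A : set T) : measurable A ->
  A `&` E = set0 -> (0 <= c)%R -> c%:E <= mu E ->
  c%:E * mnormalize (mrestr mu mE) P A = 0.
Proof.
move=> mA AE0 c0 cE; have := mnormalize_mrestrE mA; rewrite AE0 measure0.
move/eqP; rewrite mule_eq0 => /orP[/eqP ->|/eqP E0]; first by rewrite mule0.
rewrite E0 lee_fin in cE; have -> : c = 0%R by apply/le_anti; rewrite cE c0.
by rewrite mul0e.
Qed.

End mnormalize_mrestr.

Lemma mnormalize_mass1 d (T : measurableType d) (R : realType)
    (mu : {measure set T -> \bar R}) (P : probability T R) :
  mu setT = 1%E -> mnormalize mu P = mu.
Proof.
move=> mu1; apply/funext => A; rewrite /mnormalize /= mu1 onee_eq0 /=.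
by rewrite invr1 mule1.
Qed.

Section glued_coupling.
Local Open Scope ereal_scope.
Context d (U : measurableType d) (R : realType).
Variables (a b : probability U R) (E : nat -> set U).
Hypothesis hE : measurable_partition E.
Variable c : nat -> nat -> R.
Hypothesis c_ge0 : forall i j, (0 <= c i j)%R.
Hypothesis c_row : forall i, \sum_(j <oo) (c i j)%:E = a (E i).
Hypothesis c_col : forall j, \sum_(i <oo) (c i j)%:E = b (E j).

Let mE := measurable_part hE.
(* If [a (E i) = 0], then [a_ i] is the junk value [a]; the weights [c i _]
   vanish in that case. *)
Local Notation a_ i := (mnormalize (mrestr a (mE i)) a).
Local Notation b_ j := (mnormalize (mrestr b (mE j)) b).

Definition glued_measure := mseries (fun i => mseries (fun j =>
  mscale (NngNum (c_ge0 i j)) (a_ i \x b_ j)) 0) 0.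

Lemma glued_measure_setX (A B : set U) : measurable A -> measurable B ->
  glued_measure (A `*` B) = \sum_(i <oo) \sum_(j <oo) (c i j)%:E * (a_ i A * b_ j B).
Proof.
move=> mA mB; apply: eq_eseriesr => i _; apply: eq_eseriesr => j _.
by congr (_ * _); exact: product_measure1E.
Qed.

Let glued_term_ge0 i j (A B : set U) : 0 <= (c i j)%:E * (a_ i A * b_ j B).
Proof. by rewrite mule_ge0 ?lee_fin // mule_ge0. Qed.

Lemma glued_measure_fst (A : set U) : measurable A -> glued_measure (A `*` setT) = a A.
Proof.
move=> mA; rewrite glued_measure_setX // (measure_partition hE a mA).
apply: eq_eseriesr => i _; rewrite -(mnormalize_mrestrE a (mE i)) ?fin_num_measure //.
transitivity (a_ i A * \sum_(j <oo) (c i j)%:E); last by rewrite c_row.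
rewrite -[X in X * _](@fineK _ (a_ i A)) ?fin_num_measure // -nneseriesZl.
  apply: eq_eseriesr => j _.
  by rewrite probability_setT mule1 fineK ?fin_num_measure // muleC.
by move=> j _; rewrite lee_fin.
Qed.

Lemma glued_measure_snd (B : set U) : measurable B -> glued_measure (setT `*` B) = b B.
Proof.
move=> mB; rewrite glued_measure_setX // nneseries_interchange; last first.
  by move=> i j; exact: glued_term_ge0.
rewrite (measure_partition hE b mB).
apply: eq_eseriesr => j _; rewrite -(mnormalize_mrestrE b (mE j)) ?fin_num_measure //.
transitivity (b_ j B * \sum_(i <oo) (c i j)%:E); last by rewrite c_col.
rewrite -[X in X * _](@fineK _ (b_ j B)) ?fin_num_measure // -nneseriesZl.
  apply: eq_eseriesr => i _.
  by rewrite probability_setT mul1e fineK ?fin_num_measure // muleC.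
by move=> i _; rewrite lee_fin.
Qed.

Let c_le_a i j : (c i j)%:E <= a (E i).
Proof. by rewrite -c_row; apply: nneseries_ge_term => k; rewrite lee_fin. Qed.

Let c_le_b i j : (c i j)%:E <= b (E j).
Proof. by rewrite -c_col; apply: nneseries_ge_term => k; rewrite lee_fin. Qed.

(* [glued_measure] has mass 1, so [mnormalize] merely repackages it as a
   probability: the fallback [a \x b] is never used. *)
Definition glued_coupling := mnormalize glued_measure (a \x b).

Lemma glued_measure_setT : glued_measure setT = 1.
Proof. by rewrite -setXTT glued_measure_fst // probability_setT. Qed.

Lemma glued_couplingE (A : set (U * U)) : glued_coupling A = glued_measure A.
Proof. by rewrite /glued_coupling (mnormalize_mass1 _ glued_measure_setT). Qed.

Lemma glued_coupling_couplings : couplings a b glued_coupling.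
Proof.
split => A mA; [rewrite -(glued_measure_fst mA)|rewrite -(glued_measure_snd mA)];
  exact: glued_couplingE.
Qed.

Lemma glued_coupling_cell k l : glued_coupling (E k `*` E l) <= (c k l)%:E.
Proof.
have disj i j : i != j -> E j `&` E i = set0.
  by move=> ij; rewrite setIC; move/trivIsetP : (trivIset_part hE); apply.
rewrite glued_couplingE glued_measure_setX //.
rewrite (nneseries_single _ (n := k)) => [|i|i ik]; try exact: glued_term_ge0.
- rewrite (nneseries_single _ (n := l)) => [|j|j jl]; try exact: glued_term_ge0.
    rewrite muleC gee_pMl ?lee_fin ?fin_numM ?fin_num_measure //.
    by rewrite (le_trans (gee_pMl _ _ _)) ?probability_le1 ?fin_num_measure.
  rewrite muleCA (mul_mnormalize_mrestr_disj _ _ (fin_num_measure _ _ (mE j))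
    (mE l) (disj _ _ jl) (c_ge0 k j) (c_le_b k j)).
  by rewrite mule0.
- exact: nneseries_ge0.
- apply: eseries0 => j _ _; rewrite muleA.
  rewrite (mul_mnormalize_mrestr_disj _ _ (fin_num_measure _ _ (mE i))
    (mE k) (disj _ _ ik) (c_ge0 i j) (c_le_a i j)).
  by rewrite mul0e.
Qed.

End glued_coupling.

Section integral_cellwise.
Local Open Scope ereal_scope.
Context d d' (U : measurableType d) (V : measurableType d') (R : realType).
Variables (E : nat -> set U) (B : nat -> set V).
Hypotheses (hE : measurable_partition E) (hB : measurable_partition B).
Variables (mu : {measure set (U * U) -> \bar R}) (nu : {measure set (V * V) -> \bar R}).
Hypothesis mu_le_nu : forall i j, mu (E i `*` E j) <= nu (B i `*` B j).
Variables (f : U * U -> R) (g : V * V -> R) (v : nat -> nat -> R).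
Hypotheses (mf : measurable_fun setT f) (mg : measurable_fun setT g).
Hypotheses (f_ge0 : forall z, (0 <= f z)%R) (v_ge0 : forall i j, (0 <= v i j)%R).
Hypothesis f_le : forall i j z, E i z.1 -> E j z.2 -> (f z <= v i j)%R.
Hypothesis g_ge : forall i j z, B i z.1 -> B j z.2 -> (v i j <= g z)%R.

Lemma ge0_le_integral_cellwise : \int[mu]_z (f z)%:E <= \int[nu]_z (g z)%:E.
Proof.
have g_ge0 z : (0 <= g z)%R.
  have [i [j [Bi Bj]]] : exists i j, B i z.1 /\ B j z.2.
    have : setT z.1 /\ setT z.2 by [].
    by rewrite -(bigcup_part hB) => -[[i _ ?] [j _ ?]]; exists i, j.
  exact: le_trans (v_ge0 i j) (g_ge Bi Bj).
have mEE i j : measurable (E i `*` E j) by apply: measurableX; exact: measurable_part.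
have mBB i j : measurable (B i `*` B j) by apply: measurableX; exact: measurable_part.
rewrite (ge0_integral_partitionX hE) ?(ge0_integral_partitionX hB); first last.
- by move=> z; rewrite lee_fin.
- exact/measurable_EFinP.
- by move=> z; rewrite lee_fin.
- exact/measurable_EFinP.
apply: lee_nneseries => [i _ _|i _].
  by apply: nneseries_ge0 => j _ _; apply: integral_ge0 => z _; rewrite lee_fin.
apply: lee_nneseries => [j _ _|j _]; first by apply: integral_ge0 => z _; rewrite lee_fin.
apply: (@le_trans _ _ (\int[mu]_(z in E i `*` E j) (v i j)%:E)).
  apply: ge0_le_integral => //; first by move=> z _; rewrite lee_fin.
  - by apply/measurable_EFinP; exact: measurable_funS mf.
  - by move=> z [Ei Ej]; rewrite lee_fin; exact: f_le.
apply: (@le_trans _ _ (\int[nu]_(z in B i `*` B j) (v i j)%:E)).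
  by rewrite !integral_cst // lee_wpmul2l ?lee_fin.
apply: ge0_le_integral => //; first by move=> z _; rewrite lee_fin.
- by apply/measurable_EFinP; exact: measurable_funS mg.
- by move=> z [Bi Bj]; rewrite lee_fin; exact: g_ge.
Qed.

End integral_cellwise.

Lemma ge0_integralD_cst d (T : measurableType d) (R : realType)
    (P : probability T R) (f : T -> R) (e : R) :
  measurable_fun setT f -> (forall z, 0 <= f z) -> 0 <= e ->
  (\int[P]_z (f z + e)%:E = \int[P]_z (f z)%:E + e%:E)%E.
Proof.
move=> mf f0 e0; under eq_integral do rewrite EFinD.
rewrite ge0_integralD //; first last.
- exact/measurable_EFinP.
- by move=> z _; rewrite lee_fin.
rewrite integral_cst //; congr (_ + _)%E; rewrite -[RHS]mule1; congr (_ * _)%E.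
exact: probability_setT.
Qed.

Definition mfun_of d d' (T1 : measurableType d) (T2 : measurableType d')
    (f : T1 -> T2) (mf : measurable_fun setT f) : {mfun T1 >-> T2} :=
  HB.pack f (isMeasurableFun.Build _ _ _ _ f mf).

Section Wdist_pushforward.
Local Open Scope ereal_scope.
Context (R : realType) (Y : ptopologicalType) d (U : measurableType d).
Variables (N : Y -> Y -> R) (s : nat -> Y).
Hypothesis hN : pseudometric N.
Hypothesis cN : forall y, continuous (N y : Y -> R^o).
Hypothesis dense_s : forall y e, (0 < e)%R -> exists k, (N (s k) y < e)%R.
Variables (T : U -> Borel Y) (mT : measurable_fun setT T) (a b : probability U R).

Let mT_preimage A : measurable A -> measurable (T @^-1` A).
Proof. by move=> mA; rewrite -[X in measurable X]setTI; exact: mT. Qed.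

Let TT (z : U * U) : Borel Y * Borel Y := (T z.1, T z.2).

Let mTT : measurable_fun setT TT.
Proof. by apply: measurable_fun_pair; apply: measurableT_comp. Qed.

Let mN := measurable_pseudometric hN cN dense_s.

Lemma Wdist_pushforward_le_pullback :
  Wdist (N : Borel Y -> Borel Y -> R) (pushforward a T) (pushforward b T)
  <= Wdist (fun x x' => N (T x) (T x')) a b.
Proof.
apply: le_ereal_inf_tmp => _ [g [ga gb] <-]; apply: ereal_inf_lbound.
exists (distribution g (mfun_of mTT)).
  by split => A mA; [exact: ga (mT_preimage mA)|exact: gb (mT_preimage mA)].
rewrite /= ge0_integral_pushforward //.
- by apply/measurable_EFinP.
- by move=> z _; rewrite lee_fin; case: hN.
Qed.

Lemma pseudometric_quadrangle x1 x2 y1 y2 :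
  (N y1 y2 <= N x1 y1 + N x1 x2 + N x2 y2)%R.
Proof.
have [_ [_ [Nsym Ntri]]] := hN.
have := Ntri y1 x1 y2; have := Ntri x1 x2 y2; rewrite (Nsym y1 x1); lra.
Qed.

Lemma Wdist_pullback_le_pushforward :
  Wdist (fun x x' => N (T x) (T x')) a b
  <= Wdist (N : Borel Y -> Borel Y -> R) (pushforward a T) (pushforward b T).
Proof.
apply: le_ereal_inf_tmp => _ [pi [pa pb] <-]; apply/lee_addgt0Pr => e e0.
have [N0 [_ [Nsym _]]] := hN.
pose r := (e / 4)%R; have r0 : (0 < r)%R by rewrite divr_gt0.
have e4 : e = (4 * r)%R by rewrite /r mulrC divfK // pnatr_eq0.
pose B := seqDU (fun k => [set y : Borel Y | (N (s k) y < r)%R]).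
have hB : measurable_partition B.
  apply: seqDU_partition => [k|].
    by apply: open_Borel_measurable; exact: open_pseudometric_ball.
  by apply/seteqP; split => // y _; have [k yk] := dense_s y r0; exists k.
have B_ball k : B k `<=` [set y | (N (s k) y < r)%R] by exact: subset_seqDU.
pose E k := T @^-1` B k; have hE : measurable_partition E.
  exact: preimage_partition.
have mB := measurable_part hB.
pose c i j := fine (pi (B i `*` B j)).
have cE i j : (c i j)%:E = pi (B i `*` B j).
  by rewrite fineK ?fin_num_measure //; exact: measurableX.
have c_ge0 i j : (0 <= c i j)%R by rewrite -lee_fin cE.
have c_row i : \sum_(j <oo) (c i j)%:E = a (E i).
  under eq_eseriesr do rewrite cE.
  by rewrite -(measure_setXT_partition hB _ (mB i)); exact: pa.
have c_col j : \sum_(i <oo) (c i j)%:E = b (E j).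
  under eq_eseriesr do rewrite cE.
  by rewrite -(measure_setTX_partition hB _ (mB j)); exact: pb.
pose gam := glued_coupling a b hE c_ge0.
apply: (@le_trans _ _ (\int[gam]_z (N (T z.1) (T z.2))%:E)).
  by apply: ereal_inf_lbound; exists gam => //; exact: glued_coupling_couplings.
rewrite -ge0_integralD_cst ?(ltW e0) //.
apply: (@ge0_le_integral_cellwise _ _ _ _ _ _ _ hE hB _ _ _ _ _
  (fun i j => N (s i) (s j) + 2 * r)%R).
- move=> i j; apply: le_trans (glued_coupling_cell hE c_ge0 c_row c_col i j) _.
  by rewrite cE.
- exact: measurableT_comp mN mTT.
- exact: measurable_funD.
- by move=> z; exact: N0.
- by move=> i j; rewrite addr_ge0 ?N0 // mulr_ge0 // ltW.
- move=> i j z /B_ball /= Ei /B_ball /= Ej.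
  have := pseudometric_quadrangle (s i) (s j) (T z.1) (T z.2); lra.
- move=> i j z /B_ball /= Bi /B_ball /= Bj.
  have := pseudometric_quadrangle z.1 z.2 (s i) (s j).
  rewrite (Nsym z.1) (Nsym z.2); lra.
Qed.

End Wdist_pushforward.

Theorem mainTheorem1 (R : realType) (X Y : completePseudoMetricType R)
  (hX : polish X) (hY : polish Y)
  (T : X -> Y) (mT : measurable_fun [set: Borel X] (T : Borel X -> Borel Y))
  (N : Y -> Y -> R) (hN : pseudometric N)
  (cN : continuous ((fun p : Y * Y => N p.1 p.2) : Y * Y -> R^o))
  (bN : exists M : R, forall y y' : Y, N y y' <= M)
  (a b : probability (Borel X) R) :
  Wdist (N : Borel Y -> Borel Y -> R)
        (pushforward a (T : Borel X -> Borel Y))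
        (pushforward b (T : Borel X -> Borel Y))
  = Wdist (fun x x' : Borel X => N (T x) (T x')) a b.
Proof.
have cNy : forall y, continuous (N y : Y -> R^o) := (continuous_curry cN).2.
have [_ [D [cD dD]]] := hY.
have [s dense_s] := pseudometric_dense_seq hN cNy cD dD (ex_intro _ point I).
apply/le_anti/andP; split.
- exact: (Wdist_pushforward_le_pullback hN cNy dense_s mT).
- exact: (Wdist_pullback_le_pushforward hN cNy dense_s mT).
Qed.
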